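(* Let $\Gamma$ be a $\mathbb{Z}^d$-periodic graph with fundamental domain $W$, identified with $[n]$. The generic dispersion polynomial $\Phi(z,\lambda,e,V)=\det M(z,\lambda,e,V)$, where $M(z,\lambda,e,V)=\lambda I_n-H(z,e,V)$, is cancellation-free.
   Context: A $\mathbb{Z}^d$-periodic graph $\Gamma$ is a simple undirected graph with bounded vertex degrees and a free action of $\mathbb{Z}^d$ by automorphisms, $(\alpha,v)\mapsto\alpha+v$, with finitely many orbits of vertices and edges; $W$ contains one vertex from each vertex orbit. The generic Floquet matrix $H(z,e,V)$ is the $W\times W$ matrix with $(v,u)$ entry $\delta_{v,u}V(v)-\sum_{\alpha\in\mathbb{Z}^d:\ v\sim\alpha+u}e_{(v,\alpha+u)}z^\alpha$, where the edge weights $e$ (one indeterminate per $\mathbb{Z}^d$-orbit of edges, $e_{(u,v)}=e_{(v,u)}$) and potentials $V(v)$ (one indeterminate per $v\in W$) are independent indeterminates, and $z^\alpha=z_1^{\alpha_1}\cdots z_d^{\alpha_d}$. For an $n\times n$ matrix $M=(f_{i,j})$ of (Laurent) polynomials, $\det M=\sum_{w\in S_n}\mathrm{sgn}(w)M_w$ with $M_w=f_{1,w(1)}\cdots f_{n,w(n)}$; $\det M$ is cancellation-free if for every $w\in S_n$ with $M_w\neq 0$, every monomial occurring in $M_w$ occurs in $\det M$ (i.e. the support of $M_w$ is contained in the support of $\det M$). Here monomials are in all the variables $z,\lambda,e,V$. *)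

From mathcomp Require Import all_boot all_order all_algebra perm.
Set Implicit Arguments. Unset Strict Implicit. Unset Printing Implicit Defensive.
Import GRing.Theory Num.Theory.
Local Open Scope ring_scope.

(* A Laurent monomial over a finite set of variables X is an exponent vector X -> int.
   A Laurent polynomial is represented by a formal (unnormalised) list of terms
   (coefficient, monomial); its actual coefficient at a monomial is [lcoef]. *)
Definition lmonom (X : finType) := {ffun X -> int}.
Definition lpoly (X : finType) := seq (int * lmonom X).

Definition lcoef (X : finType) (p : lpoly X) (mo : lmonom X) : int :=
  \sum_(t <- p | t.2 == mo) t.1.

Definition occurs (X : finType) (mo : lmonom X) (p : lpoly X) : bool :=
  lcoef p mo != 0.

Definition lone (X : finType) : lpoly X := [:: (1, 0)].
Definition lscale (X : finType) (c : int) (p : lpoly X) : lpoly X :=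
  [seq (c * t.1, t.2) | t <- p].
Definition lmul (X : finType) (p q : lpoly X) : lpoly X :=
  [seq (a.1 * b.1, a.2 + b.2) | a <- p, b <- q].
Definition lprod (X : finType) (ps : seq (lpoly X)) : lpoly X :=
  foldr (@lmul X) (lone X) ps.

Definition Var (d m n : nat) : finType := ('I_d + unit + 'I_m + 'I_n)%type.
Definition zvar d m n (i : 'I_d) : Var d m n := inl (inl (inl i)).
Definition lamvar d m n : Var d m n := inl (inl (inr tt)).
Definition evar d m n (k : 'I_m) : Var d m n := inl (inr k).
Definition Vvar d m n (v : 'I_n) : Var d m n := inr v.

Definition xmon (X : finType) (x : X) : lmonom X := [ffun y => ((y == x) : nat)%:Z].
Definition zmon d m n (al : {ffun 'I_d -> int}) : lmonom (Var d m n) :=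
  [ffun y => match y with inl (inl (inl i)) => al i | _ => 0 end].

(* Vertex set W x Z^d with W = 'I_n; Z^d acts freely by translation of the second
   component, so (u, alpha) is the vertex alpha + u. *)
Definition vert (d n : nat) := ('I_n * {ffun 'I_d -> int})%type.
Definition shift d n (ga : {ffun 'I_d -> int}) (x : vert d n) : vert d n := (x.1, x.2 + ga).
Definition vtx d n (u : 'I_n) (al : {ffun 'I_d -> int}) : vert d n := (u, al).

(* adj is a simple graph on W x Z^d, invariant under the Z^d action, with finitely many
   orbits of edges: every edge orbit has a representative (u,0) ~ (v,alpha) with
   |alpha_i| <= B.  (This also gives bounded vertex degrees.) *)
Definition periodic_graph (d n B : nat) (adj : vert d n -> vert d n -> bool) : Prop :=
  [/\ (forall x y, adj x y = adj y x),
      (forall x, ~~ adj x x),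
      (forall ga x y, adj (shift ga x) (shift ga y) = adj x y) &
      (forall u v al, adj (vtx u 0) (vtx v al) -> forall i, `|al i| <= B%:Z)].

Definition edge_orbit_labelling (d n m : nat) (adj : vert d n -> vert d n -> bool)
    (lab : vert d n -> vert d n -> 'I_m) : Prop :=
  (forall x y x' y', adj x y -> adj x' y' ->
     (lab x y = lab x' y' <->
      exists ga, (x' = shift ga x /\ y' = shift ga y) \/ (x' = shift ga y /\ y' = shift ga x)))
  /\ (forall k : 'I_m, exists x y, adj x y /\ lab x y = k).

Definition box (d B : nat) : seq {ffun 'I_d -> int} :=
  [seq [ffun i => (f i : nat)%:Z - B%:Z] | f : {ffun 'I_d -> 'I_(B + B).+1} <- enum {ffun 'I_d -> 'I_(B + B).+1}].

Section Floquet.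
Variables (d n m B : nat) (adj : vert d n -> vert d n -> bool) (lab : vert d n -> vert d n -> 'I_m).

Definition Hentry (v u : 'I_n) : lpoly (Var d m n) :=
  (if v == u then [:: (1, xmon (Vvar d m v))] else [::]) ++
  [seq (-1, xmon (evar d n (lab (vtx v 0) (vtx u al))) + zmon m n al)
    | al <- box d B & adj (vtx v 0) (vtx u al)].

Definition Mentry (v u : 'I_n) : lpoly (Var d m n) :=
  (if v == u then [:: (1, xmon (lamvar d m n))] else [::]) ++ lscale (-1) (Hentry v u).

Definition Mterm (w : 'S_n) : lpoly (Var d m n) :=
  lprod [seq Mentry i (w i) | i <- enum 'I_n].

Definition dispersion : lpoly (Var d m n) :=
  flatten [seq lscale ((-1) ^+ odd_perm w) (Mterm w) | w <- enum {perm 'I_n}].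

End Floquet.

Definition cancellation_free d n m B adj lab : Prop :=
  forall (w : 'S_n) (mo : lmonom (Var d m n)),
    occurs mo (@Mterm d n m B adj lab w) -> occurs mo (@dispersion d n m B adj lab).

From mathcomp Require Import all_boot all_order all_algebra perm.
Set Implicit Arguments. Unset Strict Implicit. Unset Printing Implicit Defensive.

(* Every term of M_w = f_{1,w(1)} ... f_{n,w(n)} has coefficient (-1)^k, where k is the
   degree of its monomial in the potentials V, so the coefficient is determined by the
   monomial.  For u <> v in W, the degree of the monomial in the edge variables of the
   orbits joining u and v is the number of arcs between u and v in the functional graph
   of w.  Two permutations with the same undirected functional graph have the same
   cycles, hence the same sign.  Thus all terms of det M = sum_w sgn(w) M_w carrying a
   given monomial have the same sign, and nothing cancels. *)

Definition joins (T : eqType) (e : T * T) (u v : T) : bool :=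
  (e == (u, v)) || (e == (v, u)).

Lemma joins_diag (T : eqType) (i u v : T) : u != v -> joins (i, i) u v = false.
Proof.
move=> uv; rewrite /joins !xpair_eqE.
by apply/negP => /orP [] /andP [/eqP iu /eqP iv]; rewrite -iu -iv eqxx in uv.
Qed.

Lemma joins_endpoints (T : eqType) (e : T * T) i j u v :
  joins e i j -> joins e u v = joins (i, j) u v.
Proof.
by case/orP => /eqP ->; rewrite // /joins orbC !xpair_eqE andbC [(j == u) && _]andbC.
Qed.

Section PermParity.
Variable T : finType.
Implicit Types s : {perm T}.

Definition arc_count s (u v : T) : nat := (s u == v) + (s v == u).

Lemma arc_countE s u v : u != v -> arc_count s u v = \sum_x joins (x, s x) u v.
Proof.
move=> uv; rewrite (bigD1 u) // (bigD1 v) 1?eq_sym //= big1 ?addn0; last first.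
  by move=> x /andP [xu xv]; rewrite /joins !xpair_eqE (negbTE xu) (negbTE xv).
by rewrite /joins !xpair_eqE !eqxx (negbTE uv) (eq_sym v) (negbTE uv) orbF.
Qed.

Lemma porbit_arc_count s u v : 0 < arc_count s u v -> v \in porbit s u.
Proof.
rewrite /arc_count; case: eqP => [<- _|_]; first by rewrite (mem_porbit s 1).
by case: eqP => // <- _; rewrite porbit_sym (mem_porbit s 1).
Qed.

Lemma porbit_subset s1 s2 :
  (forall x, s1 x \in porbit s2 x) -> forall x, porbit s1 x \subset porbit s2 x.
Proof.
move=> s1_s2 x; apply/subsetP => _ /porbitP [i ->].
elim: i => [|i IHi]; first by rewrite expg0 perm1 porbit_id.
rewrite expgSr permM -(eqP (etrans (eq_porbit_mem _ _ _) IHi)).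
exact: s1_s2.
Qed.

Lemma mem_porbit_arc_count s s' :
  (forall u v, u != v -> arc_count s u v = arc_count s' u v) ->
  forall x, s x \in porbit s' x.
Proof.
move=> eq_arcs x; have [->|sx_x] := eqVneq (s x) x; first exact: porbit_id.
by apply: porbit_arc_count; rewrite -eq_arcs 1?eq_sym // /arc_count eqxx.
Qed.

Lemma odd_perm_arc_count s1 s2 :
  (forall u v, u != v -> arc_count s1 u v = arc_count s2 u v) ->
  odd_perm s1 = odd_perm s2.
Proof.
move=> eq_arcs; have in_porbit2 := mem_porbit_arc_count eq_arcs.
have in_porbit1 := mem_porbit_arc_count (fun u v uv => esym (eq_arcs u v uv)).
have eq_porbit x : porbit s1 x = porbit s2 x.
  by apply/eqP; rewrite eqEsubset !porbit_subset.
by rewrite /odd_perm /porbits (eq_imset _ eq_porbit).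
Qed.

End PermParity.

Import GRing.Theory Num.Theory.
Local Open Scope ring_scope.

Lemma lcoef_scale (X : finType) c (p : lpoly X) mo : lcoef (lscale c p) mo = c * lcoef p mo.
Proof. by rewrite /lcoef /lscale big_map mulr_sumr. Qed.

Lemma lcoef_uniform (X : finType) (p : lpoly X) mo c :
  (forall t, t \in p -> t.2 = mo -> t.1 = c) ->
  lcoef p mo = c * (count (fun t => t.2 == mo) p)%:Z.
Proof.
move=> coef_c; rewrite /lcoef big_seq_cond (eq_bigr (fun=> c)); last first.
  by move=> t /andP [tp /eqP]; apply: coef_c.
by rewrite -big_seq_cond big_const_seq iter_addr_0 -mulr_natr natz.
Qed.

Section Degrees.
Variables (d m n : nat) (ends : 'I_m -> 'I_n * 'I_n).
Notation X := (Var d m n).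
Implicit Types (mo : lmonom X) (x : X).

Definition Vdegree mo : int := \sum_v mo (Vvar d m v).

Definition edge_degree mo (u v : 'I_n) : int :=
  \sum_(k | joins (ends k) u v) mo (evar d n k).

Lemma VdegreeD mo1 mo2 : Vdegree (mo1 + mo2) = Vdegree mo1 + Vdegree mo2.
Proof. by rewrite /Vdegree -big_split; apply: eq_bigr => v _; rewrite ffunE. Qed.

Lemma edge_degreeD mo1 mo2 u v :
  edge_degree (mo1 + mo2) u v = edge_degree mo1 u v + edge_degree mo2 u v.
Proof. by rewrite /edge_degree -big_split; apply: eq_bigr => k _; rewrite ffunE. Qed.

Lemma Vdegree0 : Vdegree 0 = 0.
Proof. by rewrite /Vdegree big1 // => v _; rewrite ffunE. Qed.

Lemma edge_degree0 u v : edge_degree 0 u v = 0.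
Proof. by rewrite /edge_degree big1 // => k _; rewrite ffunE. Qed.

Lemma Vdegree_xmon x : Vdegree (xmon x) = (if x is inr _ then 1 else 0).
Proof.
rewrite /Vdegree; case: x => [y|v].
  by rewrite big1 // => v _; rewrite ffunE.
rewrite (bigD1 v) //= big1 ?ffunE ?eqxx ?addr0 // => v' v'v.
by rewrite ffunE (inj_eq inr_inj) (negbTE v'v).
Qed.

Lemma edge_degree_xmon x u v :
  edge_degree (xmon x) u v = if x is inl (inr k) then (joins (ends k) u v : nat)%:Z else 0.
Proof.
rewrite /edge_degree; case: x => [[y|k]|w].
- by rewrite big1 // => k _; rewrite ffunE.
- rewrite big_mkcond (bigD1 k) //= big1 ?ffunE ?eqxx ?addr0; first by case: ifP.
  by move=> k' k'k; rewrite ffunE (inj_eq inl_inj) (inj_eq inr_inj) (negbTE k'k) if_same.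
- by rewrite big1 // => k _; rewrite ffunE.
Qed.

Lemma Vdegree_zmon al : Vdegree (zmon m n al) = 0.
Proof. by rewrite /Vdegree big1 // => v _; rewrite ffunE. Qed.

Lemma edge_degree_zmon al u v : edge_degree (zmon m n al) u v = 0.
Proof. by rewrite /edge_degree big1 // => k _; rewrite ffunE. Qed.

Definition term_shape (c : 'I_n -> 'I_n -> int) (t : int * lmonom X) : Prop :=
  exists N : nat, [/\ Vdegree t.2 = N%:Z, t.1 = (-1) ^+ N &
    forall u v, u != v -> edge_degree t.2 u v = c u v].

Lemma term_shape_lone t : t \in lone X -> term_shape (fun _ _ => 0) t.
Proof.
by rewrite inE => /eqP ->; exists 0%N; split => [||u v _]; rewrite ?Vdegree0 ?edge_degree0.
Qed.

Lemma term_shape_lmul c1 c2 (p q : lpoly X) :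
    (forall t, t \in p -> term_shape c1 t) -> (forall t, t \in q -> term_shape c2 t) ->
  forall t, t \in lmul p q -> term_shape (fun u v => c1 u v + c2 u v) t.
Proof.
move=> shape_p shape_q _ /allpairsP [[a b] [/= ap bq ->]].
have [Na [Va sa ea]] := shape_p _ ap; have [Nb [Vb sb eb]] := shape_q _ bq.
exists (Na + Nb)%N; split => /=.
- by rewrite VdegreeD Va Vb.
- by rewrite sa sb exprD.
- by move=> u v uv; rewrite edge_degreeD ea // eb.
Qed.

Lemma eq_term_shape c c' t :
  (forall u v, u != v -> c u v = c' u v) -> term_shape c t -> term_shape c' t.
Proof. by move=> eq_c [N [VN sN eN]]; exists N; split => // u v uv; rewrite eN ?eq_c. Qed.

Lemma term_shape_lprod (I : Type) (F : I -> lpoly X) (c : I -> 'I_n -> 'I_n -> int)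
    (s : seq I) :
    (forall i t, t \in F i -> term_shape (c i) t) ->
  forall t, t \in lprod [seq F i | i <- s] ->
    term_shape (fun u v => \sum_(i <- s) c i u v) t.
Proof.
move=> shape_F; elim: s => [|i s IHs] t /=.
  by move/term_shape_lone; apply: eq_term_shape => u v _; rewrite big_nil.
move/(term_shape_lmul (shape_F i) IHs).
by apply: eq_term_shape => u v _; rewrite big_cons.
Qed.

End Degrees.

Section Floquet.
Variables (d n m B : nat) (adj : vert d n -> vert d n -> bool).
Variables (lab : vert d n -> vert d n -> 'I_m) (ends : 'I_m -> 'I_n * 'I_n).
Hypothesis ends_lab : forall i j al,
  adj (vtx i 0) (vtx j al) -> joins (ends (lab (vtx i 0) (vtx j al))) i j.

Lemma term_shape_Mentry i j t :
  t \in Mentry B adj lab i j -> term_shape ends (fun u v => (joins (i, j) u v : nat)%:Z) t.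
Proof.
rewrite /Mentry /Hentry /lscale map_cat !mem_cat -map_comp; case/or3P.
- case: eqP => [<-|_]; rewrite ?in_nil // inE => /eqP ->.
  by exists 0%N; split => [||u v uv]; rewrite ?Vdegree_xmon ?edge_degree_xmon ?joins_diag.
- case: eqP => [<-|_]; rewrite ?in_nil // inE => /eqP ->.
  by exists 1%N; split => [||u v uv]; rewrite ?Vdegree_xmon ?edge_degree_xmon ?joins_diag.
- case/mapP => al; rewrite mem_filter => /andP [adj_ij _] ->.
  exists 0%N; split => [||u v _] //=; first by rewrite VdegreeD Vdegree_xmon Vdegree_zmon.
  rewrite edge_degreeD edge_degree_xmon edge_degree_zmon addr0.
  by rewrite (joins_endpoints _ _ (ends_lab adj_ij)).
Qed.

Lemma term_shape_Mterm w t :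
  t \in Mterm B adj lab w -> term_shape ends (fun u v => (arc_count w u v)%:Z) t.
Proof.
move/(term_shape_lprod (fun i => term_shape_Mentry (j := w i))).
apply: eq_term_shape => u v uv.
by rewrite arc_countE // big_enum /= (big_morph Posz PoszD (erefl _)).
Qed.

Definition count_Mterm w mo : nat := count (fun t => t.2 == mo) (Mterm B adj lab w).

Lemma lcoef_Mterm w mo :
  lcoef (Mterm B adj lab w) mo = (-1) ^+ `|Vdegree mo|%N * (count_Mterm w mo)%:Z.
Proof. by apply: lcoef_uniform => t /term_shape_Mterm [N [VN -> _]] <-; rewrite VN. Qed.

Lemma odd_perm_Mterm w1 w2 t1 t2 :
  t1 \in Mterm B adj lab w1 -> t2 \in Mterm B adj lab w2 -> t1.2 = t2.2 ->
  odd_perm w1 = odd_perm w2.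
Proof.
move=> /term_shape_Mterm [_ [_ _ deg1]] /term_shape_Mterm [_ [_ _ deg2]] eq_mo.
by apply: odd_perm_arc_count => u v uv; have := deg1 u v uv; rewrite eq_mo deg2 // => -[].
Qed.

Lemma lcoef_dispersion mo :
  lcoef (dispersion B adj lab) mo =
  \sum_(w <- enum {perm 'I_n}) (-1) ^+ odd_perm w * lcoef (Mterm B adj lab w) mo.
Proof.
rewrite /dispersion /lcoef big_flatten /= big_map.
by apply: eq_bigr => w _; apply: lcoef_scale.
Qed.

Lemma dispersion_cancellation_free : cancellation_free B adj lab.
Proof.
move=> w mo; rewrite /occurs lcoef_dispersion lcoef_Mterm => nz_w.
have cnt_w : (0 < count_Mterm w mo)%N.
  by rewrite lt0n; apply: contraNneq nz_w => ->; rewrite mulr0.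
have same_sign w' : (-1) ^+ odd_perm w' * lcoef (Mterm B adj lab w') mo =
    (-1) ^+ odd_perm w * (-1) ^+ `|Vdegree mo|%N * (count_Mterm w' mo)%:Z.
  rewrite lcoef_Mterm mulrA.
  have [-> | cnt_w'] := posnP (count_Mterm w' mo); first by rewrite !mulr0.
  move: cnt_w cnt_w'; rewrite -!has_count /count_Mterm.
  move=> /hasP [t t_w /eqP t_mo] /hasP [t' t_w' /eqP t'_mo].
  by rewrite (odd_perm_Mterm t_w' t_w) // t_mo t'_mo.
rewrite (eq_bigr _ (fun w' _ => same_sign w')) -mulr_sumr !mulf_neq0 ?signr_eq0 //.
by rewrite big_enum /= (bigD1 w) //= lt0r_neq0 // ltr_wpDr ?sumr_ge0.
Qed.

End Floquet.

Lemma edge_orbit_ends d n m (adj : vert d n -> vert d n -> bool)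
    (lab : vert d n -> vert d n -> 'I_m) :
  edge_orbit_labelling adj lab ->
  exists ends : 'I_m -> 'I_n * 'I_n, forall i j al,
    adj (vtx i 0) (vtx j al) -> joins (ends (lab (vtx i 0) (vtx j al))) i j.
Proof.
case=> same_orbit label_used.
have edge_of k : exists e : vert d n * vert d n, adj e.1 e.2 && (lab e.1 e.2 == k).
  by have [x [y [xy <-]]] := label_used k; exists (x, y); rewrite /= xy eqxx.
exists (fun k => let e := xchoose (edge_of k) in (e.1.1, e.2.1)) => i j al adj_ij /=.
have /andP [adj_e /eqP lab_e] := xchooseP (edge_of (lab (vtx i 0) (vtx j al))).
have [/(_ lab_e) [ga [[ei ej] | [ei ej]]] _] := same_orbit _ _ _ _ adj_e adj_ij.
- by move: (congr1 fst ei) (congr1 fst ej) => /= <- <-; rewrite /joins eqxx.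
- by move: (congr1 fst ei) (congr1 fst ej) => /= <- <-; rewrite /joins eqxx orbT.
Qed.

Theorem proposition2p1 (d n m B : nat)
    (adj : vert d n -> vert d n -> bool) (lab : vert d n -> vert d n -> 'I_m) :
  periodic_graph B adj -> edge_orbit_labelling adj lab ->
  cancellation_free B adj lab.
Proof.
move=> _ /edge_orbit_ends [ends ends_lab].
exact: dispersion_cancellation_free ends_lab.
Qed.
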